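(* Let $S\subset\mathbb{Z}^d$ be a finite set containing the origin, $\mathcal{P}=\{P_\alpha\}_{\alpha\in S}$ a resolution of unity on $\mathbb{C}^D$ with $\operatorname{rank}P_0=1$, $\mu\in\mathbb{C}^D$ a unit vector and $C_\mu\phi=2\langle\phi,\mu\rangle\mu-\phi$. If $P_0\mu\neq0$, then $U(S,\mathcal{P},C_\mu)$ does not have the eigenvalue $-1$.
   Context: A resolution of unity: orthogonal projections $P_\alpha$ on $\mathbb{C}^D$, $P_\alpha P_\beta=0$ ($\alpha\neq\beta$), $\sum_\alpha P_\alpha=I$. $(\tau^\alpha f)(x)=f(x-\alpha)$ on $\ell^2(\mathbb{Z}^d,\mathbb{C}^D)$, $U(S,\mathcal{P},C)=\big(\sum_{\alpha\in S}\tau^\alpha P_\alpha\big)C$ with $C$ acting pointwise; eigenvalue means point spectrum. Inner products are linear in the first argument. *)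

From Stdlib Require Import Reals List ZArith.
Open Scope R_scope.

Record Cpx := mkC { Re : R; Im : R }.
Definition Czero : Cpx := mkC 0 0.
Definition Cone : Cpx := mkC 1 0.
Definition Cadd (z w : Cpx) : Cpx := mkC (Re z + Re w) (Im z + Im w).
Definition Copp (z : Cpx) : Cpx := mkC (- Re z) (- Im z).
Definition Cmul (z w : Cpx) : Cpx :=
  mkC (Re z * Re w - Im z * Im w) (Re z * Im w + Im z * Re w).
Definition Cconj (z : Cpx) : Cpx := mkC (Re z) (- Im z).
Definition RtoC (r : R) : Cpx := mkC r 0.
Definition Cnorm2 (z : Cpx) : R := Re z * Re z + Im z * Im z.

Fixpoint Csum (n : nat) (f : nat -> Cpx) : Cpx :=
  match n with O => Czero | S n' => Cadd (Csum n' f) (f n') end.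
Fixpoint Rsum (n : nat) (f : nat -> R) : R :=
  match n with O => 0 | S n' => Rsum n' f + f n' end.

(** * C^D: vectors are nat -> Cpx, only indices i < D matter;
      D x D matrices are nat -> nat -> Cpx, only indices < D matter. *)
Definition vec := nat -> Cpx.
Definition mat := nat -> nat -> Cpx.

Definition vec_eq (D : nat) (u v : vec) : Prop := forall i, (i < D)%nat -> u i = v i.
Definition vec_nonzero (D : nat) (u : vec) : Prop := exists i, (i < D)%nat /\ u i <> Czero.
Definition mat_eq (D : nat) (A B : mat) : Prop :=
  forall i j, (i < D)%nat -> (j < D)%nat -> A i j = B i j.

Definition mat_app (D : nat) (A : mat) (v : vec) : vec :=
  fun i => Csum D (fun j => Cmul (A i j) (v j)).
Definition mat_mul (D : nat) (A B : mat) : mat :=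
  fun i k => Csum D (fun j => Cmul (A i j) (B j k)).
Definition mat_adj (A : mat) : mat := fun i j => Cconj (A j i).
Definition mat_add (A B : mat) : mat := fun i j => Cadd (A i j) (B i j).
Definition mat0 : mat := fun _ _ => Czero.
Definition mat1 : mat := fun i j => if Nat.eqb i j then Cone else Czero.

(** inner product, linear in the first argument *)
Definition inner (D : nat) (u v : vec) : Cpx := Csum D (fun i => Cmul (u i) (Cconj (v i))).
Definition vnorm2 (D : nat) (u : vec) : R := Rsum D (fun i => Cnorm2 (u i)).

Definition orth_proj (D : nat) (P : mat) : Prop :=
  mat_eq D (mat_mul D P P) P /\ mat_eq D (mat_adj P) P.

Definition rank_one (D : nat) (A : mat) : Prop :=
  exists v : vec, vec_nonzero D v /\
    (forall w, exists c : Cpx, vec_eq D (mat_app D A w) (fun i => Cmul c (v i))) /\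
    (exists w, vec_eq D (mat_app D A w) v).

(** * Z^d: points are lists of integers of length d *)
Definition pt := list Z.
Fixpoint psub (x a : pt) : pt :=
  match x, a with
  | x0 :: x', a0 :: a' => (x0 - a0)%Z :: psub x' a'
  | _, _ => nil
  end.
Definition origin (d : nat) : pt := repeat 0%Z d.

Definition mat_sum_list (S : list pt) (P : pt -> mat) : mat :=
  fold_right (fun a acc => mat_add (P a) acc) mat0 S.

Definition resolution_of_unity (D : nat) (S : list pt) (P : pt -> mat) : Prop :=
  NoDup S /\
  (forall a, In a S -> orth_proj D (P a)) /\
  (forall a b, In a S -> In b S -> a <> b -> mat_eq D (mat_mul D (P a) (P b)) mat0) /\
  mat_eq D (mat_sum_list S P) mat1.

Definition field := pt -> vec.

Definition in_l2 (d D : nat) (f : field) : Prop :=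
  exists M : R, forall L : list pt, NoDup L -> (forall x, In x L -> length x = d) ->
    fold_right (fun x acc => vnorm2 D (f x) + acc) 0 L <= M.

Definition coin_mu (D : nat) (mu : vec) (phi : vec) : vec :=
  fun i => Cadd (Cmul (Cmul (RtoC 2) (inner D phi mu)) (mu i)) (Copp (phi i)).

Definition walk (D : nat) (S : list pt) (P : pt -> mat) (Cop : vec -> vec) (f : field) : field :=
  fun x => fold_right (fun a acc => fun i => Cadd (mat_app D (P a) (Cop (f (psub x a))) i) (acc i))
                      (fun _ => Czero) S.

Definition is_eigenvalue (d D : nat) (T : field -> field) (lam : Cpx) : Prop :=
  exists f : field, in_l2 d D f /\
    (exists x, length x = d /\ vec_nonzero D (f x)) /\
    (forall x, length x = d -> vec_eq D (T f x) (fun i => Cmul lam (f x i))).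

(* Let f be an l^2 eigenvector of U = (sum_a tau^a P_a) C_mu for the eigenvalue -1 and apply P_b to
   U f = -f: since the P_a are mutually orthogonal projections this reads
     2 <f(x-b), mu> P_b mu - P_b f(x-b) = - P_b f(x).
   For b = 0 the f-terms cancel, so P_0 mu <> 0 forces <f(x), mu> = 0 everywhere.  Then for b <> 0 the
   identity says that P_b f is invariant under translation by b; being square summable it vanishes.
   Hence f(x) = P_0 f(x) lies in the line spanned by P_0, which also contains P_0 mu <> 0, and
   <f(x), mu> = <P_0 f(x), P_0 mu> = 0 forces f(x) = 0. *)
From Stdlib Require Import Reals List ZArith Lra Lia Psatz Arith Classical.
Open Scope R_scope.

Lemma Cpx_ext (z w : Cpx) : Re z = Re w -> Im z = Im w -> z = w.
Proof. destruct z, w; simpl; intros; subst; reflexivity. Qed.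

Ltac cpx_unfold := repeat match goal with z : Cpx |- _ => destruct z end;
  unfold Cadd, Cmul, Copp, Cconj, Czero, Cone, RtoC, Cnorm2 in *; simpl in *.

Lemma Cring : ring_theory Czero Cone Cadd Cmul (fun a b => Cadd a (Copp b)) Copp (@eq Cpx).
Proof. constructor; intros; apply Cpx_ext; cpx_unfold; ring. Qed.
Add Ring Cring : Cring.

Lemma Cnorm2_nonneg z : 0 <= Cnorm2 z.
Proof. destruct z; unfold Cnorm2; simpl; nra. Qed.

Lemma Cnorm2_pos z : z <> Czero -> 0 < Cnorm2 z.
Proof.
  destruct z as [a b]; unfold Cnorm2, Czero; simpl; intros Hz.
  destruct (Req_dec a 0), (Req_dec b 0); subst; try nra.
  exfalso; apply Hz; reflexivity.
Qed.

Lemma Cmul_eq0_l z w : w <> Czero -> Cmul z w = Czero -> z = Czero.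
Proof.
  intros Hw Hzw.
  assert (Hn := Cnorm2_pos w Hw).
  assert (Hz : Cmul z (RtoC (Cnorm2 w)) = Czero).
  { replace (Cmul z (RtoC (Cnorm2 w))) with (Cmul (Cmul z w) (Cconj w))
      by (apply Cpx_ext; cpx_unfold; ring).
    rewrite Hzw; ring. }
  destruct z as [a b]; unfold Cmul, RtoC, Czero in Hz; simpl in Hz.
  injection Hz; intros Hb Ha; apply Cpx_ext; simpl; nra.
Qed.

Lemma Cconj_add z w : Cconj (Cadd z w) = Cadd (Cconj z) (Cconj w).
Proof. apply Cpx_ext; cpx_unfold; ring. Qed.
Lemma Cconj_mul z w : Cconj (Cmul z w) = Cmul (Cconj z) (Cconj w).
Proof. apply Cpx_ext; cpx_unfold; ring. Qed.
Lemma Cconj_involutive z : Cconj (Cconj z) = z.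
Proof. apply Cpx_ext; cpx_unfold; ring. Qed.
Lemma Cconj_zero : Cconj Czero = Czero.
Proof. apply Cpx_ext; cpx_unfold; ring. Qed.
Lemma Cconj_eq0 z : Cconj z = Czero -> z = Czero.
Proof. intros H. rewrite <- (Cconj_involutive z), H. apply Cconj_zero. Qed.

Lemma Csum_ext n f g : (forall i, (i < n)%nat -> f i = g i) -> Csum n f = Csum n g.
Proof. induction n; simpl; intros H; auto. rewrite IHn, H by (intros; try apply H; lia). auto. Qed.
Lemma Csum_zero n f : (forall i, (i < n)%nat -> f i = Czero) -> Csum n f = Czero.
Proof. induction n; simpl; intros H; auto. rewrite IHn, H by (intros; try apply H; lia). ring. Qed.
Lemma Csum_add n f g : Csum n (fun i => Cadd (f i) (g i)) = Cadd (Csum n f) (Csum n g).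
Proof. induction n; simpl. ring. rewrite IHn; ring. Qed.
Lemma Csum_mul_l n c f : Csum n (fun i => Cmul c (f i)) = Cmul c (Csum n f).
Proof. induction n; simpl. ring. rewrite IHn; ring. Qed.
Lemma Csum_opp n f : Csum n (fun i => Copp (f i)) = Copp (Csum n f).
Proof. induction n; simpl. ring. rewrite IHn; ring. Qed.
Lemma Csum_conj n f : Cconj (Csum n f) = Csum n (fun i => Cconj (f i)).
Proof. induction n; simpl. apply Cconj_zero. rewrite Cconj_add, IHn; auto. Qed.
Lemma Csum_swap n m g :
  Csum n (fun i => Csum m (fun j => g i j)) = Csum m (fun j => Csum n (fun i => g i j)).
Proof. induction n; simpl. symmetry; apply Csum_zero; auto. rewrite IHn, <- Csum_add. auto. Qed.
Lemma Csum_delta n k g :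
  (k < n)%nat -> Csum n (fun j => if Nat.eqb k j then g j else Czero) = g k.
Proof.
  induction n; intros Hk; [lia|]. simpl.
  destruct (Nat.eqb_spec k n).
  - subst. rewrite Csum_zero. ring. intros i Hi. destruct (Nat.eqb_spec n i); [lia|auto].
  - rewrite IHn by lia. ring.
Qed.

Lemma Rsum_ext n f g : (forall i, (i < n)%nat -> f i = g i) -> Rsum n f = Rsum n g.
Proof. induction n; simpl; intros H; auto. rewrite IHn, H by (intros; try apply H; lia). auto. Qed.
Lemma Rsum_nonneg n f : (forall i, (i < n)%nat -> 0 <= f i) -> 0 <= Rsum n f.
Proof.
  induction n; simpl; intros H. lra.
  assert (0 <= Rsum n f) by (apply IHn; intros; apply H; lia).
  specialize (H n ltac:(lia)). lra.
Qed.
Lemma Rsum_pos n f k :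
  (forall i, (i < n)%nat -> 0 <= f i) -> (k < n)%nat -> 0 < f k -> 0 < Rsum n f.
Proof.
  induction n; simpl; intros H Hk Hf; [lia|].
  assert (Hn := H n ltac:(lia)).
  destruct (Nat.eq_dec k n).
  - subst. assert (0 <= Rsum n f) by (apply Rsum_nonneg; intros; apply H; lia). lra.
  - assert (0 < Rsum n f) by (apply IHn; auto; lia). lra.
Qed.

Lemma fold_right_Cadd_zero {A} (L : list A) (g : A -> Cpx) :
  (forall a, In a L -> g a = Czero) -> fold_right (fun a acc => Cadd (g a) acc) Czero L = Czero.
Proof. induction L; simpl; intros H; auto. rewrite H, IHL by auto. ring. Qed.

Lemma fold_right_Cadd_single {A} (L : list A) (g : A -> Cpx) b : NoDup L -> In b L ->
  (forall a, In a L -> a <> b -> g a = Czero) ->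
  fold_right (fun a acc => Cadd (g a) acc) Czero L = g b.
Proof.
  induction L as [|a L IH]; simpl; intros HN Hb H; [contradiction|].
  inversion HN; subst.
  destruct Hb as [<- | Hb].
  - rewrite fold_right_Cadd_zero. ring. intros a' Ha'. apply H; auto. intros ->; contradiction.
  - rewrite IH, H; auto. ring. intros ->; contradiction.
Qed.

Lemma fold_right_Rplus_lower {A} (f : A -> R) (L : list A) eps :
  (forall x, In x L -> eps <= f x) -> INR (length L) * eps <= fold_right (fun x acc => f x + acc) 0 L.
Proof.
  induction L as [|a L IH]; cbn [length fold_right]; intros H. simpl; lra.
  assert (eps <= f a) by (apply H; simpl; auto).
  assert (INR (length L) * eps <= fold_right (fun x acc => f x + acc) 0 L)
    by (apply IH; intros; apply H; simpl; auto).
  rewrite S_INR; lra.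
Qed.

Lemma vnorm2_nonneg D u : 0 <= vnorm2 D u.
Proof. apply Rsum_nonneg; intros; apply Cnorm2_nonneg. Qed.
Lemma vnorm2_pos D u : vec_nonzero D u -> 0 < vnorm2 D u.
Proof.
  intros [i [Hi Hu]]. apply (Rsum_pos _ _ i); auto.
  - intros; apply Cnorm2_nonneg.
  - apply Cnorm2_pos; auto.
Qed.
Lemma vnorm2_ext D u v : vec_eq D u v -> vnorm2 D u = vnorm2 D v.
Proof. intros H; apply Rsum_ext; intros; rewrite H; auto. Qed.

Lemma mat_app_ext D A B u v i :
  (forall j, (j < D)%nat -> A i j = B i j) -> vec_eq D u v -> mat_app D A u i = mat_app D B v i.
Proof. intros H1 H2; apply Csum_ext; intros; rewrite H1, H2; auto. Qed.
Lemma mat_app_sub D A u w i :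
  mat_app D A (fun j => Cadd (u j) (Copp (w j))) i = Cadd (mat_app D A u i) (Copp (mat_app D A w i)).
Proof. unfold mat_app. rewrite <- Csum_opp, <- Csum_add. apply Csum_ext; intros; ring. Qed.
Lemma mat_app_scale D A c u i : mat_app D A (fun j => Cmul c (u j)) i = Cmul c (mat_app D A u i).
Proof. unfold mat_app. rewrite <- Csum_mul_l. apply Csum_ext; intros; ring. Qed.
Lemma mat_app_mul D A B u i : mat_app D A (mat_app D B u) i = mat_app D (mat_mul D A B) u i.
Proof.
  unfold mat_app, mat_mul.
  rewrite (Csum_ext _ _ (fun j => Csum D (fun k => Cmul (A i j) (Cmul (B j k) (u k))))).
  2:{ intros; rewrite <- Csum_mul_l; auto. }
  rewrite Csum_swap. apply Csum_ext; intros k _.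
  rewrite Cring.(Rmul_comm), <- Csum_mul_l. apply Csum_ext; intros; ring.
Qed.
Lemma mat_app_mat0 D u i : mat_app D mat0 u i = Czero.
Proof. apply Csum_zero; intros; unfold mat0; ring. Qed.
Lemma mat_app_mat1 D u i : (i < D)%nat -> mat_app D mat1 u i = u i.
Proof.
  intros Hi. unfold mat_app, mat1.
  rewrite (Csum_ext _ _ (fun j => if Nat.eqb i j then u j else Czero)).
  - apply Csum_delta; auto.
  - intros j _; destruct (Nat.eqb i j); ring.
Qed.
Lemma mat_app_mat_add D A B u i :
  mat_app D (mat_add A B) u i = Cadd (mat_app D A u i) (mat_app D B u i).
Proof. unfold mat_app, mat_add. rewrite <- Csum_add. apply Csum_ext; intros; ring. Qed.
Lemma mat_app_mat_sum_list D (L : list pt) P u i :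
  mat_app D (mat_sum_list L P) u i = fold_right (fun a acc => Cadd (mat_app D (P a) u i) acc) Czero L.
Proof. induction L; simpl. apply mat_app_mat0. rewrite mat_app_mat_add, IHL; auto. Qed.
Lemma mat_app_fold_right D A (L : list pt) (u : pt -> vec) i :
  mat_app D A (fold_right (fun a acc => fun j => Cadd (u a j) (acc j)) (fun _ => Czero) L) i
  = fold_right (fun a acc => Cadd (mat_app D A (u a) i) acc) Czero L.
Proof.
  induction L; simpl.
  - apply Csum_zero; intros; ring.
  - rewrite <- IHL. unfold mat_app. rewrite <- Csum_add. apply Csum_ext; intros; ring.
Qed.
Lemma mat_app_coin_mu D A mu u i :
  mat_app D A (coin_mu D mu u) i =
  Cadd (Cmul (Cmul (RtoC 2) (inner D u mu)) (mat_app D A mu i)) (Copp (mat_app D A u i)).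
Proof.
  unfold mat_app, coin_mu. rewrite <- Csum_opp, <- Csum_mul_l, <- Csum_add.
  apply Csum_ext; intros; ring.
Qed.

Lemma inner_ext D u u' w w' : vec_eq D u u' -> vec_eq D w w' -> inner D u w = inner D u' w'.
Proof. intros H1 H2; apply Csum_ext; intros; rewrite H1, H2; auto. Qed.
Lemma inner_mat_adj D A u w : inner D (mat_app D A u) w = inner D u (mat_app D (mat_adj A) w).
Proof.
  unfold inner, mat_app, mat_adj.
  rewrite (Csum_ext _ _ (fun i => Csum D (fun j => Cmul (Cmul (A i j) (u j)) (Cconj (w i))))).
  2:{ intros. rewrite Cring.(Rmul_comm), <- Csum_mul_l. apply Csum_ext; intros; ring. }
  rewrite Csum_swap. apply Csum_ext; intros j _.
  rewrite Csum_conj, <- Csum_mul_l. apply Csum_ext; intros.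
  rewrite Cconj_mul, Cconj_involutive; ring.
Qed.
Lemma inner_add_l D u w z : inner D (fun i => Cadd (u i) (w i)) z = Cadd (inner D u z) (inner D w z).
Proof. unfold inner. rewrite <- Csum_add. apply Csum_ext; intros; ring. Qed.
Lemma inner_add_r D u w z : inner D z (fun i => Cadd (u i) (w i)) = Cadd (inner D z u) (inner D z w).
Proof. unfold inner. rewrite <- Csum_add. apply Csum_ext; intros; rewrite Cconj_add; ring. Qed.
Lemma inner_conj D u w : Cconj (inner D u w) = inner D w u.
Proof.
  unfold inner. rewrite Csum_conj.
  apply Csum_ext; intros; rewrite Cconj_mul, Cconj_involutive; ring.
Qed.
Lemma inner_self D v : inner D v v = RtoC (vnorm2 D v).
Proof.
  unfold inner, vnorm2. induction D; simpl. reflexivity.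
  rewrite IHD. apply Cpx_ext; cpx_unfold; ring.
Qed.
Lemma inner_scale D a b u w :
  inner D (fun i => Cmul a (u i)) (fun i => Cmul b (w i)) = Cmul (Cmul a (Cconj b)) (inner D u w).
Proof. unfold inner. rewrite <- Csum_mul_l. apply Csum_ext; intros; rewrite Cconj_mul; ring. Qed.
Lemma inner_zero_r D u : inner D u (fun _ => Czero) = Czero.
Proof. apply Csum_zero; intros; rewrite Cconj_zero; ring. Qed.

(* Pythagoras for u = P u + (u - P u), the two parts being orthogonal. *)
Lemma orth_proj_vnorm2_le D P u : orth_proj D P -> vnorm2 D (mat_app D P u) <= vnorm2 D u.
Proof.
  intros [HPP HPadj].
  set (p := mat_app D P u).
  set (q := fun i => Cadd (u i) (Copp (p i))).
  assert (Hpq : inner D p q = Czero).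
  { unfold p. rewrite inner_mat_adj, <- (inner_zero_r D u).
    apply inner_ext; [intros i Hi; auto|]. intros i Hi.
    rewrite (mat_app_ext D (mat_adj P) P q q) by (intros; auto; intros k Hk; auto).
    unfold q. rewrite mat_app_sub. unfold p. rewrite mat_app_mul.
    rewrite (mat_app_ext D (mat_mul D P P) P u u) by (intros; auto; intros k Hk; auto). ring. }
  assert (Hqp : inner D q p = Czero) by (rewrite <- inner_conj, Hpq; apply Cconj_zero).
  assert (Hu : inner D u u = inner D (fun i => Cadd (p i) (q i)) (fun i => Cadd (p i) (q i))).
  { apply inner_ext; intros i Hi; unfold q; ring. }
  rewrite inner_add_l, !inner_add_r, Hpq, Hqp, !inner_self in Hu.
  assert (H := f_equal Re Hu). simpl in H.
  pose proof (vnorm2_nonneg D q). lra.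
Qed.

Lemma psub_length x a : length (psub x a) = Nat.min (length x) (length a).
Proof. revert a; induction x as [|x0 x IHx]; intros a; destruct a; simpl; auto. Qed.
Lemma psub_origin x : psub x (origin (length x)) = x.
Proof. unfold origin. induction x; simpl; auto. rewrite IHx. f_equal. lia. Qed.
Lemma nth_psub x a k : (k < length x)%nat -> (k < length a)%nat ->
  nth k (psub x a) 0%Z = (nth k x 0 - nth k a 0)%Z.
Proof.
  revert a k; induction x as [|x0 x IHx]; intros a k H1 H2; destruct a as [|a0 a]; simpl in *; try lia.
  destruct k; simpl; auto. apply IHx; lia.
Qed.
Lemma exists_nth_neq0 b : b <> origin (length b) -> exists k, (k < length b)%nat /\ nth k b 0%Z <> 0%Z.
Proof.
  induction b as [|b0 b IH]; simpl; intros Hb; [contradiction|].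
  destruct (Z.eq_dec b0 0) as [->|Hb0].
  - destruct IH as [k [Hk Hnth]]; [intros E; apply Hb; unfold origin in *; simpl; f_equal; exact E|].
    exists (S k); split; [lia|auto].
  - exists 0%nat; split; [lia|auto].
Qed.

Definition translates (y b : pt) (n : nat) : pt := Nat.iter n (fun z => psub z b) y.

Lemma translates_length y b n : length b = length y -> length (translates y b n) = length y.
Proof.
  intros Hb. induction n; simpl; auto.
  change (length (psub (translates y b n) b) = length y). rewrite psub_length, IHn, Hb; lia.
Qed.
Lemma nth_translates y b n k : length b = length y -> (k < length y)%nat ->
  nth k (translates y b n) 0%Z = (nth k y 0 - Z.of_nat n * nth k b 0)%Z.
Proof.
  intros Hb Hk. induction n; simpl; [lia|].
  change (nth k (psub (translates y b n) b) 0%Z = (nth k y 0 - Z.of_nat (S n) * nth k b 0)%Z).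
  rewrite nth_psub, IHn by (rewrite ?translates_length; lia). lia.
Qed.
Lemma translates_inj y b : length b = length y -> b <> origin (length b) ->
  forall n m, translates y b n = translates y b m -> n = m.
Proof.
  intros Hb Hb0 n m Hnm.
  destruct (exists_nth_neq0 b Hb0) as [k [Hk Hbk]].
  assert (H := f_equal (fun l => nth k l 0%Z) Hnm). simpl in H.
  rewrite !nth_translates in H by lia.
  assert (Z.of_nat n * nth k b 0 = Z.of_nat m * nth k b 0)%Z by lia.
  apply Z.mul_reg_r in H0; auto. lia.
Qed.

Lemma in_l2_uniform_lower_bound d D f (y : nat -> pt) eps : in_l2 d D f ->
  (forall n, length (y n) = d) -> (forall n m, y n = y m -> n = m) ->
  (forall n, eps <= vnorm2 D (f (y n))) -> eps <= 0.
Proof.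
  intros [M HM] Hy Hinj Heps.
  apply Rnot_lt_le; intros Hpos.
  destruct (INR_unbounded (M / eps)) as [N HN].
  assert (HNM : M < INR N * eps).
  { apply (Rmult_lt_compat_r eps) in HN; auto.
    unfold Rdiv in HN. rewrite Rmult_assoc, Rinv_l in HN; lra. }
  set (L := map y (seq 0 N)).
  assert (Hup : fold_right (fun x acc => vnorm2 D (f x) + acc) 0 L <= M).
  { apply HM.
    - apply NoDup_map_NoDup_ForallPairs; [intros n m _ _; apply Hinj | apply seq_NoDup].
    - intros x Hx. apply in_map_iff in Hx. destruct Hx as [n [<- _]]. auto. }
  assert (Hlow : INR N * eps <= fold_right (fun x acc => vnorm2 D (f x) + acc) 0 L).
  { replace N with (length L) at 1 by (unfold L; now rewrite length_map, length_seq).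
    apply fold_right_Rplus_lower. intros x Hx.
    apply in_map_iff in Hx. destruct Hx as [n [<- _]]. auto. }
  lra.
Qed.

Lemma mat_app_walk D S P Cop f x b i : NoDup S -> In b S -> (i < D)%nat ->
  mat_eq D (mat_mul D (P b) (P b)) (P b) ->
  (forall a, In a S -> a <> b -> mat_eq D (mat_mul D (P b) (P a)) mat0) ->
  mat_app D (P b) (walk D S P Cop f x) i = mat_app D (P b) (Cop (f (psub x b))) i.
Proof.
  intros HND Hb Hi Hidem Horth. unfold walk.
  rewrite mat_app_fold_right, (fold_right_Cadd_single _ _ b); auto.
  - rewrite mat_app_mul. apply mat_app_ext; [intros; apply Hidem; auto | intros j Hj; auto].
  - intros a Ha Hab. rewrite mat_app_mul, (mat_app_ext D _ mat0 _ (Cop (f (psub x a)))).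
    + apply mat_app_mat0.
    + intros; apply Horth; auto.
    + intros j Hj; auto.
Qed.

Lemma mat_sum_list_single D S P u b i : NoDup S -> In b S -> (i < D)%nat ->
  mat_eq D (mat_sum_list S P) mat1 ->
  (forall a, In a S -> a <> b -> mat_app D (P a) u i = Czero) -> u i = mat_app D (P b) u i.
Proof.
  intros HND Hb Hi Hsum Hzero.
  rewrite <- (mat_app_mat1 D u i Hi), (mat_app_ext D mat1 (mat_sum_list S P) u u).
  - rewrite mat_app_mat_sum_list. apply (fold_right_Cadd_single _ (fun a => mat_app D (P a) u i)); auto.
  - intros j Hj; symmetry; apply Hsum; auto.
  - intros j Hj; auto.
Qed.

Section MinusOneEigenvector.

Variables (d D : nat) (S : list pt) (P : pt -> mat) (mu : vec) (f : field).
Hypothesis S_length : forall a, In a S -> length a = d.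
Hypothesis origin_in_S : In (origin d) S.
Hypothesis S_NoDup : NoDup S.
Hypothesis P_orth_proj : forall a, In a S -> orth_proj D (P a).
Hypothesis P_mutually_orth :
  forall a b, In a S -> In b S -> a <> b -> mat_eq D (mat_mul D (P a) (P b)) mat0.
Hypothesis P_sum : mat_eq D (mat_sum_list S P) mat1.
Hypothesis P0_mu_neq0 : vec_nonzero D (mat_app D (P (origin d)) mu).
Hypothesis f_l2 : in_l2 d D f.
Hypothesis f_eigen : forall x, length x = d ->
  vec_eq D (walk D S P (coin_mu D mu) f x) (fun i => Cmul (Copp Cone) (f x i)).

Lemma proj_eigen_equation b x i : In b S -> length x = d -> (i < D)%nat ->
  Cadd (Cmul (Cmul (RtoC 2) (inner D (f (psub x b)) mu)) (mat_app D (P b) mu i))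
       (Copp (mat_app D (P b) (f (psub x b)) i)) = Copp (mat_app D (P b) (f x) i).
Proof.
  intros Hb Hx Hi.
  rewrite <- mat_app_coin_mu, <- (mat_app_walk D S P (coin_mu D mu) f x b i); auto.
  - rewrite (mat_app_ext D (P b) (P b) _ _ i (fun _ _ => eq_refl) (f_eigen x Hx)), mat_app_scale.
    ring.
  - apply (proj1 (P_orth_proj b Hb)).
Qed.

Lemma inner_f_mu_eq0 x : length x = d -> inner D (f x) mu = Czero.
Proof.
  intros Hx. destruct P0_mu_neq0 as [i0 [Hi0 Hz]].
  assert (HE := proj_eigen_equation (origin d) x i0 origin_in_S Hx Hi0).
  rewrite <- Hx, psub_origin, Hx in HE.
  set (k := inner D (f x) mu) in *.
  set (z := mat_app D (P (origin d)) mu i0) in *.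
  set (w := mat_app D (P (origin d)) (f x) i0) in *.
  apply (Cmul_eq0_l _ (RtoC 2)); [intros E; injection E; lra|].
  apply (Cmul_eq0_l _ z); auto.
  transitivity (Cadd (Cadd (Cmul (Cmul (RtoC 2) k) z) (Copp w)) w); [ring|].
  rewrite HE; ring.
Qed.

Lemma proj_f_translation_invariant b x : In b S -> length x = d ->
  vec_eq D (mat_app D (P b) (f (psub x b))) (mat_app D (P b) (f x)).
Proof.
  intros Hb Hx i Hi.
  assert (HE := proj_eigen_equation b x i Hb Hx Hi).
  rewrite inner_f_mu_eq0 in HE by (rewrite psub_length, Hx, S_length; auto; lia).
  set (u := mat_app D (P b) (f (psub x b)) i) in *.
  transitivity (Copp (Cadd (Cmul (Cmul (RtoC 2) Czero) (mat_app D (P b) mu i)) (Copp u))); [ring|].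
  rewrite HE; ring.
Qed.

Lemma proj_f_eq0 b y : In b S -> b <> origin d -> length y = d ->
  vec_eq D (mat_app D (P b) (f y)) (fun _ => Czero).
Proof.
  intros Hb Hb0 Hy i Hi. apply NNPP; intros Hne.
  set (w := mat_app D (P b) (f y)).
  assert (Hlen : length b = length y) by (rewrite S_length, Hy; auto).
  assert (Hw : forall n, vec_eq D (mat_app D (P b) (f (translates y b n))) w).
  { induction n; intros j Hj; simpl; auto.
    change (mat_app D (P b) (f (psub (translates y b n) b)) j = w j).
    rewrite proj_f_translation_invariant by (rewrite ?translates_length; auto). auto. }
  assert (Hpos : 0 < vnorm2 D w) by (apply vnorm2_pos; exists i; auto).
  enough (vnorm2 D w <= 0) by lra.
  apply (in_l2_uniform_lower_bound d D f (translates y b)); auto.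
  - intros n; rewrite translates_length; auto.
  - apply translates_inj; auto. rewrite S_length; auto.
  - intros n. rewrite <- (vnorm2_ext D _ _ (Hw n)). apply orth_proj_vnorm2_le, P_orth_proj; auto.
Qed.

Lemma f_in_range_P0 y : length y = d -> vec_eq D (f y) (mat_app D (P (origin d)) (f y)).
Proof.
  intros Hy i Hi. apply (mat_sum_list_single D S P); auto.
  intros a Ha Ha0. apply proj_f_eq0; auto.
Qed.

Hypothesis P0_rank_one : rank_one D (P (origin d)).

Lemma f_eq0 y : length y = d -> vec_eq D (f y) (fun _ => Czero).
Proof.
  intros Hy. destruct P0_rank_one as [v [Hv [Hrange _]]].
  destruct (Hrange (f y)) as [c1 Hc1], (Hrange mu) as [c2 Hc2].
  assert (Hc2_neq0 : c2 <> Czero).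
  { intros ->. destruct P0_mu_neq0 as [j [Hj Hz]]. apply Hz. rewrite Hc2 by auto. ring. }
  assert (Hinner : inner D (f y) mu = Cmul (Cmul c1 (Cconj c2)) (RtoC (vnorm2 D v))).
  { rewrite (inner_ext D (f y) (mat_app D (P (origin d)) (f y)) mu mu)
      by (auto using f_in_range_P0; intros j Hj; auto).
    rewrite inner_mat_adj, <- inner_self, <- inner_scale.
    apply inner_ext; intros j Hj; rewrite <- ?Hc1, <- ?Hc2 by auto; [apply f_in_range_P0; auto|].
    apply mat_app_ext; [intros; apply (proj2 (P_orth_proj _ origin_in_S)); auto | intros k Hk; auto]. }
  assert (Hc1_eq0 : c1 = Czero).
  { rewrite inner_f_mu_eq0 in Hinner by auto.
    apply (Cmul_eq0_l _ (Cmul (Cconj c2) (RtoC (vnorm2 D v)))).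
    - intros E. apply Cmul_eq0_l in E; [apply Hc2_neq0, Cconj_eq0, E|].
      intros E'. injection E'. pose proof (vnorm2_pos D v Hv). lra.
    - rewrite Hinner; ring. }
  intros i Hi. rewrite f_in_range_P0, Hc1, Hc1_eq0 by auto. ring.
Qed.

End MinusOneEigenvector.

Theorem theorem3p4 (d D : nat) (S : list pt) (P : pt -> mat) (mu : vec) :
  (forall a, In a S -> length a = d) ->
  In (origin d) S ->
  resolution_of_unity D S P ->
  rank_one D (P (origin d)) ->
  vnorm2 D mu = 1 ->
  vec_nonzero D (mat_app D (P (origin d)) mu) ->
  ~ is_eigenvalue d D (walk D S P (coin_mu D mu)) (Copp Cone).
Proof.
  intros HS H0 [HND [Hproj [Horth Hsum]]] Hrank _ HP0mu [f [Hl2 [[x [Hx [i [Hi Hfx]]]] Heig]]].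
  apply Hfx. eapply (f_eq0 d D S P mu f); eauto.
Qed.
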